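(* Let $E\to M$ be a vector bundle of rank at least $n$ with a pseudo-metric $\langle\cdot,\cdot\rangle$. Let $\widehat{u}^1,\dots,\widehat{u}^n\in\Gamma(E)$ be linearly independent over $C^\infty(M)$, and let $\widehat{Z}_1,\dots,\widehat{Z}_n$ be covariant differential operators on $E$ with symbols $\widehat{z}_i\in\Gamma(TM)$ satisfying $\langle\widehat{Z}_i(e_1),e_2\rangle+\langle e_1,\widehat{Z}_i(e_2)\rangle=\widehat{z}_i\langle e_1,e_2\rangle$. Define $a_E(e)=\sum_i\langle e,\widehat{u}^i\rangle\widehat{z}_i$ and $$e_1\circ e_2=\sum_i\Big(\langle e_1,\widehat{u}^i\rangle\widehat{Z}_i(e_2)-\langle e_2,\widehat{u}^i\rangle\widehat{Z}_i(e_1)+\langle\widehat{Z}_i(e_1),e_2\rangle\widehat{u}^i\Big).$$ Suppose there are $C_{ik}^j\in C^\infty(M)$ such that for all $i,j$: $$\widehat{Z}_i(\widehat{u}^j)=\sum_kC_{ik}^j\widehat{u}^k,\qquad [\widehat{z}_i,\widehat{z}_j]=\sum_k\big(C_{ji}^k-C_{ij}^k\big)\widehat{z}_k,\qquad\langle\widehat{u}^i,\widehat{u}^j\rangle=0.$$ Then $(E,\langle\cdot,\cdot\rangle,\circ,a_E)$ is a pre-Courant algebroid.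
   Context: A covariant differential operator on $E$: $\mathbb{R}$-linear $\widehat{Z}:\Gamma(E)\to\Gamma(E)$ with symbol $\widehat{z}\in\Gamma(TM)$ such that $\widehat{Z}(fe)=f\widehat{Z}(e)+\widehat{z}(f)e$. A pre-Courant algebroid $(E,\langle\cdot,\cdot\rangle,\circ,a_E)$: a bundle map $a_E:E\to TM$ and $\mathbb{R}$-bilinear bracket $\circ$ on $\Gamma(E)$ with $a_E(e)\langle h_1,h_2\rangle=\langle e\circ h_1,h_2\rangle+\langle h_1,e\circ h_2\rangle$, $e\circ e=\tfrac12\mathcal{D}\langle e,e\rangle$ (where $\langle\mathcal{D}(f),e\rangle=a_E(e)(f)$), and $a_E(e_1\circ e_2)=[a_E(e_1),a_E(e_2)]$. *)

(* Algebraic (Lie-Rinehart style) model of smooth geometry: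
   A   ~ C^oo(M), a commutative R-algebra (R a real field, e.g. the reals);
   V   ~ Gamma(E), an A-module;
   vector fields ~ R-linear derivations of A, with the commutator bracket. *)
From HB Require Import structures.
From mathcomp Require Import all_boot all_order all_algebra.
Set Implicit Arguments. Unset Strict Implicit. Unset Printing Implicit Defensive.
Import Order.TTheory GRing.Theory Num.Theory.
Local Open Scope ring_scope.

Section Defs.
Variables (R : realFieldType) (A : comAlgType R) (V : lmodType A).

Definition is_vector_field (X : A -> A) : Prop :=
  (forall (c : R) (f g : A), X (c *: f + g) = c *: X f + X g) /\
  (forall f g : A, X (f * g) = f * X g + g * X f).

Definition vf_bracket (X Y : A -> A) : A -> A := fun f => X (Y f) - Y (X f).

Definition pseudo_metric (g : V -> V -> A) : Prop :=
  (forall e h, g e h = g h e) /\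
  (forall (f : A) e e' h, g (f *: e + e') h = f * g e h + g e' h) /\
  (forall e, (forall h, g e h = 0) -> e = 0).

Definition cov_diff_op (Z : V -> V) (z : A -> A) : Prop :=
  (forall (c : R) e h, Z ((c%:A : A) *: e + h) = (c%:A : A) *: Z e + Z h) /\
  (forall (f : A) e, Z (f *: e) = f *: Z e + z f *: e).

Definition pre_Courant (g : V -> V -> A) (circ : V -> V -> V) (aE : V -> A -> A)
  : Prop :=
  (* a_E is a bundle map E -> TM *)
  (forall e, is_vector_field (aE e)) /\
  (forall (f : A) e h x, aE (f *: e + h) x = f * aE e x + aE h x) /\
  (forall (c : R) e1 e2 h,
      circ ((c%:A : A) *: e1 + e2) h = (c%:A : A) *: circ e1 h + circ e2 h) /\
  (forall (c : R) e h1 h2,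
      circ e ((c%:A : A) *: h1 + h2) = (c%:A : A) *: circ e h1 + circ e h2) /\
  (forall e h1 h2, aE e (g h1 h2) = g (circ e h1) h2 + g h1 (circ e h2)) /\
  (* e o e = 1/2 D<e,e>, with D defined by <D f, e> = a_E(e)(f) *)
  (exists D : A -> V,
      (forall f e, g (D f) e = aE e f) /\
      (forall e, circ e e = ((2%:R)^-1 : R)%:A *: D (g e e))) /\
  (forall e1 e2 f, aE (circ e1 e2) f = vf_bracket (aE e1) (aE e2) f).

Definition lin_indep (n : nat) (u : 'I_n -> V) : Prop :=
  forall c : 'I_n -> A, \sum_(i < n) c i *: u i = 0 -> forall i, c i = 0.

Definition anchor_of (n : nat) (g : V -> V -> A) (u : 'I_n -> V)
  (z : 'I_n -> A -> A) : V -> A -> A :=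
  fun e f => \sum_(i < n) g e (u i) * z i f.

Definition bracket_of (n : nat) (g : V -> V -> A) (u : 'I_n -> V)
  (Z : 'I_n -> V -> V) : V -> V -> V :=
  fun e1 e2 => \sum_(i < n)
    (g e1 (u i) *: Z i e2 - g e2 (u i) *: Z i e1 + g (Z i e1) e2 *: u i).

End Defs.

(* Apart from the anchor being a bracket morphism, every axiom is a direct
   computation from the compatibility of each Z_i with the pairing.  For the
   morphism property, isotropy of the u^i gives
     a_E(e1 o e2) = sum_i (<e1,u^i> a_E(Z_i e2) - <e2,u^i> a_E(Z_i e1)),
   and a_E(Z_i e) f = z_i (a_E(e) f) - sum_j <e,u^j> H_ij f, where
   H_ij f = z_i z_j f + sum_k C_ij^k z_k f is the Hessian of f for the
   connection with Christoffel symbols -C.  The bracket relation for the z_i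
   says this connection is torsion free, i.e. H is symmetric, so the H-terms
   cancel and [a_E e1, a_E e2] f remains. *)

From HB Require Import structures.
From mathcomp Require Import all_boot all_order all_algebra.
From mathcomp Require Import ring.
Set Implicit Arguments. Unset Strict Implicit. Unset Printing Implicit Defensive.
Import GRing.Theory Num.Theory.
Local Open Scope ring_scope.

Section ScalarMaps.
Variables (A : comNzRingType) (V : lmodType A) (phi : V -> A).
Hypothesis phi_scalar : scalar phi.

Let Phi : {scalar V} := HB.pack phi (GRing.isLinear.Build _ _ _ _ phi phi_scalar).

Lemma scalar_mapD e h : phi (e + h) = phi e + phi h.
Proof. exact: (raddfD Phi). Qed.

Lemma scalar_mapN e : phi (- e) = - phi e.
Proof. exact: (raddfN Phi). Qed.

Lemma scalar_mapZ f e : phi (f *: e) = f * phi e.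
Proof. exact: (scalarZ Phi). Qed.

Lemma scalar_map_sum I (r : seq I) (P : pred I) (F : I -> V) :
  phi (\sum_(i <- r | P i) F i) = \sum_(i <- r | P i) phi (F i).
Proof. exact: (raddf_sum Phi). Qed.

End ScalarMaps.

Lemma symmetric_scalar_r (A : comNzRingType) (V : lmodType A) (g : V -> V -> A) :
  (forall e h, g e h = g h e) -> (forall h, scalar (g^~ h)) -> forall e, scalar (g e).
Proof. by move=> g_sym g_scalar e f h h'; rewrite !(g_sym e) g_scalar. Qed.

Lemma scalerDMl (S : comNzRingType) (W : lmodType S) (k a a' : S) (x : W) :
  (k * a + a') *: x = k *: (a *: x) + a' *: x.
Proof. by rewrite scalerDl scalerA. Qed.

Lemma scalerDMr (S : comNzRingType) (W : lmodType S) (k a : S) (x x' : W) :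
  a *: (k *: x + x') = k *: (a *: x) + a *: x'.
Proof. by rewrite scalerDr !scalerA mulrC. Qed.

Lemma scaler_combDBD (S : comNzRingType) (W : lmodType S) (k : S)
    (x x' y y' w w' : W) :
  (k *: x + x') - (k *: y + y') + (k *: w + w')
  = k *: (x - y + w) + (x' - y' + w').
Proof.
by rewrite opprD (addrACA (k *: x)) (addrACA (k *: x - k *: y)) scalerDr scalerBr.
Qed.

Section VectorFields.
Variables (R : realFieldType) (A : comAlgType R).

Lemma vector_field_sum (X : A -> A) : is_vector_field X ->
  forall I (r : seq I) (P : pred I) (F : I -> A),
  X (\sum_(i <- r | P i) F i) = \sum_(i <- r | P i) X (F i).
Proof.
case=> X_linear _ I r P F.
exact: (raddf_sum (HB.pack X (GRing.isLinear.Build _ _ _ _ X X_linear))).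
Qed.

Lemma vector_field_comb I (r : seq I) (a : I -> A) (X : I -> A -> A) :
  (forall i, is_vector_field (X i)) ->
  is_vector_field (fun f => \sum_(i <- r) a i * X i f).
Proof.
move=> X_vf; split=> [c f h | f h].
- rewrite scaler_sumr -big_split; apply: eq_bigr => i _.
  by rewrite (X_vf i).1 mulrDr scalerAr.
- rewrite !mulr_sumr -big_split; apply: eq_bigr => i _.
  by rewrite (X_vf i).2 mulrDr (mulrCA (a i) f) (mulrCA (a i) h).
Qed.

End VectorFields.

Section PreCourant.
Variables (R : realFieldType) (A : comAlgType R) (V : lmodType A) (n : nat).
Variables (g : V -> V -> A) (u : 'I_n -> V) (Z : 'I_n -> V -> V) (z : 'I_n -> A -> A).
(* [C i k j] stands for C_{ik}^j. *)
Variable C : 'I_n -> 'I_n -> 'I_n -> A.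
Hypotheses (g_sym : forall e h, g e h = g h e) (g_scalar : forall h, scalar (g^~ h)).
Hypothesis z_vf : forall i, is_vector_field (z i).
Hypothesis Z_cov : forall i, cov_diff_op (Z i) (z i).
Hypothesis Z_metric : forall i e1 e2, g (Z i e1) e2 + g e1 (Z i e2) = z i (g e1 e2).
Hypothesis Z_u : forall i j, Z i (u j) = \sum_(k < n) C i k j *: u k.
Hypothesis z_bracket : forall i j f,
  vf_bracket (z i) (z j) f = \sum_(k < n) (C j i k - C i j k) * z k f.
Hypothesis u_isotropic : forall i j, g (u i) (u j) = 0.

Local Notation aE := (anchor_of g u z).
Local Notation circ := (bracket_of g u Z).

Let g_scalar_r := symmetric_scalar_r g_sym g_scalar.

Lemma anchor_vector_field e : is_vector_field (aE e).
Proof. exact: vector_field_comb. Qed.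

Lemma anchor_scalar f : scalar (aE^~ f).
Proof.
move=> c e h; rewrite /anchor_of mulr_sumr -big_split; apply: eq_bigr => i _ /=.
by rewrite g_scalar mulrDl mulrA.
Qed.

Lemma bracket_linear_l (c : R) e1 e2 h :
  circ (c%:A *: e1 + e2) h = c%:A *: circ e1 h + circ e2 h.
Proof.
rewrite /bracket_of scaler_sumr -big_split; apply: eq_bigr => i _ /=.
by rewrite (Z_cov i).1 !g_scalar !scalerDMl scalerDMr scaler_combDBD.
Qed.

Lemma bracket_linear_r (c : R) e h1 h2 :
  circ e (c%:A *: h1 + h2) = c%:A *: circ e h1 + circ e h2.
Proof.
rewrite /bracket_of scaler_sumr -big_split; apply: eq_bigr => i _ /=.
by rewrite (Z_cov i).1 g_scalar g_scalar_r !scalerDMl scalerDMr scaler_combDBD.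
Qed.

Lemma bracket_invariant e h1 h2 :
  aE e (g h1 h2) = g (circ e h1) h2 + g h1 (circ e h2).
Proof.
rewrite /anchor_of /bracket_of (scalar_map_sum (g_scalar _)).
rewrite (scalar_map_sum (g_scalar_r _)) -big_split; apply: eq_bigr => i _ /=.
rewrite !(scalar_mapD (g_scalar _), scalar_mapN (g_scalar _), scalar_mapZ (g_scalar _)).
rewrite !(scalar_mapD (g_scalar_r _), scalar_mapN (g_scalar_r _), scalar_mapZ (g_scalar_r _)).
rewrite -Z_metric (g_sym (u i) h2) (g_sym h1 (Z i e)); ring.
Qed.

Definition anchor_dual (f : A) : V := \sum_(i < n) z i f *: u i.

Lemma anchor_dualE f e : g (anchor_dual f) e = aE e f.
Proof.
rewrite (scalar_map_sum (g_scalar _)); apply: eq_bigr => i _.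
by rewrite (scalar_mapZ (g_scalar _)) g_sym mulrC.
Qed.

Lemma bracket_diag e : circ e e = (2%:R^-1 : R)%:A *: anchor_dual (g e e).
Proof.
rewrite /bracket_of /anchor_dual scaler_sumr; apply: eq_bigr => i _.
rewrite subrr add0r scalerA -Z_metric (g_sym e (Z i e)) -mulr2n mulrnAr -mulrnAl.
rewrite scalerMnl -mulr_natr mulVf ?pnatr_eq0 //.
by rewrite scale1r mul1r.
Qed.

Definition hess i j f := z i (z j f) + \sum_(k < n) C i j k * z k f.

Lemma hess_sym i j f : hess i j f = hess j i f.
Proof.
have := z_bracket i j f; rewrite /vf_bracket /hess => zij.
apply/eqP; rewrite -subr_eq0 opprD addrACA zij -sumrB -big_split big1 // => k _ /=.
ring.
Qed.

Lemma pairing_Z_u i e j :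
  g (Z i e) (u j) = z i (g e (u j)) - \sum_(k < n) C i k j * g e (u k).
Proof.
rewrite -Z_metric Z_u (scalar_map_sum (g_scalar_r _)).
by under eq_bigr => k _ do rewrite (scalar_mapZ (g_scalar_r _)); rewrite addrK.
Qed.

Lemma anchor_u j f : aE (u j) f = 0.
Proof. by apply: big1 => i _; rewrite u_isotropic mul0r. Qed.

Lemma anchor_Z i e f :
  aE (Z i e) f = z i (aE e f) - \sum_(j < n) g e (u j) * hess i j f.
Proof.
have reindex : \sum_(j < n) (\sum_(k < n) C i k j * g e (u k)) * z j f
    = \sum_(j < n) g e (u j) * \sum_(k < n) C i j k * z k f.
  under eq_bigr => j _ do rewrite mulr_suml.
  under [RHS]eq_bigr => j _ do rewrite mulr_sumr.
  rewrite exchange_big /=; apply: eq_bigr => j _; apply: eq_bigr => k _; ring.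
rewrite /anchor_of /hess (vector_field_sum (z_vf i)).
under eq_bigr => j _ do rewrite pairing_Z_u mulrBl.
under [X in _ = _ - X]eq_bigr => j _ do rewrite mulrDr.
rewrite sumrB big_split /= reindex opprD addrA; congr (_ - _).
by rewrite -sumrB; apply: eq_bigr => j _; rewrite (z_vf i).2; ring.
Qed.

Lemma anchor_bracket e1 e2 f :
  aE (circ e1 e2) f = vf_bracket (aE e1) (aE e2) f.
Proof.
have hess_swap : \sum_(i < n) g e1 (u i) * \sum_(j < n) g e2 (u j) * hess i j f
    = \sum_(i < n) g e2 (u i) * \sum_(j < n) g e1 (u j) * hess i j f.
  under eq_bigr => i _ do rewrite mulr_sumr.
  under [RHS]eq_bigr => i _ do rewrite mulr_sumr.
  rewrite exchange_big /=; apply: eq_bigr => j _; apply: eq_bigr => i _.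
  by rewrite hess_sym mulrCA.
have aE_scalar := anchor_scalar f.
rewrite /bracket_of (scalar_map_sum aE_scalar) /vf_bracket.
rewrite [aE e1 (aE e2 f)]/anchor_of [aE e2 (aE e1 f)]/anchor_of.
under eq_bigr => i _ do
  rewrite !(scalar_mapD aE_scalar, scalar_mapN aE_scalar, scalar_mapZ aE_scalar)
          anchor_u mulr0 addr0 !anchor_Z !mulrBr.
by rewrite !sumrB hess_swap opprB addrA subrK.
Qed.

End PreCourant.

Theorem proposition3p12 (R : realFieldType) (A : comAlgType R) (V : lmodType A)
  (n : nat) (g : V -> V -> A) (u : 'I_n -> V)
  (Z : 'I_n -> V -> V) (z : 'I_n -> A -> A) (C : 'I_n -> 'I_n -> 'I_n -> A) :
  pseudo_metric g ->
  lin_indep u ->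
  (forall i, is_vector_field (z i)) ->
  (forall i, cov_diff_op (Z i) (z i)) ->
  (forall i e1 e2, g (Z i e1) e2 + g e1 (Z i e2) = z i (g e1 e2)) ->
  (forall i j, Z i (u j) = \sum_(k < n) C i k j *: u k) ->
  (forall i j f, vf_bracket (z i) (z j) f
                 = \sum_(k < n) (C j i k - C i j k) * z k f) ->
  (forall i j, g (u i) (u j) = 0) ->
  pre_Courant g (bracket_of g u Z) (anchor_of g u z).
Proof.
move=> [g_sym [g_lin _]] _ z_vf Z_cov Z_metric Z_u z_bracket u_isotropic.
have g_scalar h : scalar (g^~ h) by move=> f e e'; exact: g_lin.
split; first exact: anchor_vector_field.
split; first by move=> f e h x; exact: anchor_scalar.
split; first exact: bracket_linear_l.
split; first exact: bracket_linear_r.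
split; first exact: bracket_invariant.
split; last exact: anchor_bracket.
exists (anchor_dual u z); split; first exact: anchor_dualE.
exact: bracket_diag.
Qed.
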